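(* Let $k \in \mathbb{N}$. The set of $\mathcal{P}$-positions of the Wythoff variant with terminal set $T_k = \{(x,y) \in \mathbb{Z}_{\ge 0}^2 : x+y \le k\}$ is exactly $P_k = T_k \cup \{(b_n,a_n) : n \in \mathbb{N}\} \cup \{(a_n,b_n) : n \in \mathbb{N}\}$.
   Context: Positions are pairs $(x,y) \in \mathbb{Z}_{\ge 0}^2$. In the Wythoff variant with terminal set $T_k$, from a position $(x,y) \notin T_k$ a move goes to any position in $\{(u,y) : 0 \le u < x\} \cup \{(x,v) : 0 \le v < y\} \cup \{(x-t,y-t) : 1 \le t \le \min(x,y)\}$ (horizontal, vertical, and diagonal queen moves); positions in $T_k$ have no moves. Players alternate; a player with no move loses (the player who moves into $T_k$ wins). A $\mathcal{P}$-position is one from which the previous player wins with optimal play; equivalently a position is $\mathcal{P}$ iff every move from it leads to a non-$\mathcal{P}$ position. Sequences: Fibonacci numbers $F_1 = F_2 = 1$, $F_{i+2} = F_{i+1} + F_i$. Let $\sigma$ be the substitution on finite sequences over $\{1,2\}$ replacing each entry $1$ by $2$ and each entry $2$ by $2,1$. Let $C_{1,1} = (1)$, $C_{i+1,1} = \sigma(C_{i,1})$. For $i \in \mathbb{N}$ let $C_i^{(k)}$ be the concatenation of $k$ copies of $C_{i,1}$. Let $(c_n)_{n \in \mathbb{N}}$ be the concatenation of $C_1^{(k)}, C_2^{(k)}, C_3^{(k)}, \dots$ in order, $d_n = c_n + 1$, $a_1 = k+1$, $a_n = k+1 + \sum_{i=1}^{n-1} c_i$, $b_1 = 2k+2$,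 $b_n = 2k+2 + \sum_{i=1}^{n-1} d_i$. *)

From mathcomp Require Import all_boot.
Set Implicit Arguments. Unset Strict Implicit. Unset Printing Implicit Defensive.

Definition terminal (k x y : nat) : bool := x + y <= k.

Definition queen_moves (x y : nat) : seq (nat * nat) :=
  [seq (u, y) | u <- iota 0 x] ++
  [seq (x, v) | v <- iota 0 y] ++
  [seq (x - t, y - t) | t <- iota 1 (minn x y)].

(* P-status computed with fuel; every move strictly decreases x + y, so
   fuel = x + y suffices. *)
Fixpoint isP_fuel (k fuel x y : nat) : bool :=
  if terminal k x y then true
  else match fuel with
       | 0 => true (* unreachable: fuel >= x + y > k >= 0 *)
       | f.+1 => all (fun p => ~~ isP_fuel k f p.1 p.2) (queen_moves x y)
       end.

Definition isP (k x y : nat) : bool := isP_fuel k (x + y) x y.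

Definition sigma (s : seq nat) : seq nat :=
  flatten [seq (if e == 1 then [:: 2] else [:: 2; 1]) | e <- s].

(* Cw i = C_{i,1} for i >= 1 (Cw 0 is junk, equal to C_{1,1}). *)
Definition Cw (i : nat) : seq nat := iter i.-1 sigma [:: 1].

Definition Cblock (k i : nat) : seq nat := flatten (nseq k (Cw i)).

Definition cprefix (k m : nat) : seq nat :=
  flatten [seq Cblock k i | i <- iota 1 m].

(* c_n (1-indexed, n >= 1); for k >= 1 every block is nonempty, so the
   first n blocks contain at least n entries. *)
Definition c (k n : nat) : nat := nth 0 (cprefix k n) n.-1.

Definition d (k n : nat) : nat := c k n + 1.

Definition a (k n : nat) : nat := k + 1 + \sum_(1 <= i < n) c k i.

Definition b (k n : nat) : nat := 2 * k + 2 + \sum_(1 <= i < n) d k i.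

From mathcomp Require Import all_boot zify.
From Stdlib Require Import Classical.
Set Implicit Arguments. Unset Strict Implicit. Unset Printing Implicit Defensive.

(* The word c_1 c_2 ... over {1, 2} is a fixed point of s |-> 1^k sigma(s), so the
   image of its letter c_n starts at position a_n: c_{a_n} = 2, followed by a 1
   when c_n = 2.  Hence b_n = a_{a_n} + 1 sits in a gap of length 2 between
   consecutive a's, and {a_n} and {b_n} partition the integers above k, with
   b_n - a_n = k + n.  The classical Wythoff argument then applies: a queen move
   keeps a coordinate or the difference y - x, so it never joins two positions
   of P_k, while every other non-terminal position can move into P_k. *)

Lemma sigma_cat s1 s2 : sigma (s1 ++ s2) = sigma s1 ++ sigma s2.
Proof. by rewrite /sigma map_cat flatten_cat. Qed.

Lemma sigma_flatten_nseq n s : sigma (flatten (nseq n s)) = flatten (nseq n (sigma s)).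
Proof. by elim: n => //= n IH; rewrite sigma_cat IH. Qed.

Lemma size_sigma s : size s <= size (sigma s).
Proof.
elim: s => //= e s IH; rewrite -[e :: s]cat1s sigma_cat size_cat.
have : 0 < size (sigma [:: e]) by rewrite /sigma /=; case: ifP.
lia.
Qed.

Lemma sigma_letters s : all (fun e => 0 < e <= 2) (sigma s).
Proof. by elim: s => //= e s IH; rewrite /sigma /= all_cat IH andbT; case: ifP. Qed.

(* A letter [e] in {1, 2} is replaced by a block of length [e] starting with 2,
   so the image of the letter at position [m] starts at [sumn (take m s)]. *)
Lemma nth_sigma_take s m : all (fun e => 0 < e <= 2) s -> m < size s ->
  nth 0 (sigma s) (sumn (take m s)) = 2 /\
  (nth 0 s m = 2 -> nth 0 (sigma s) (sumn (take m s)).+1 = 1).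
Proof.
elim: s m => // e s IH m /= /andP [he hs] hm.
have [-> | ->] : e = 1 \/ e = 2 by lia.
- case: m hm => [|m] hm //=; exact: IH.
- case: m hm => [|m] hm //=; exact: IH.
Qed.

Lemma sumn_take s m : sumn (take m s) = \sum_(i < m) nth 0 s i.
Proof.
elim: s m => [|e s IH] [|m] /=; rewrite ?big_ord0 //.
- by rewrite big1 // => i _; rewrite nth_nil.
- by rewrite big_ord_recl /= IH.
Qed.

Lemma Cw_succ i : 0 < i -> Cw i.+1 = sigma (Cw i).
Proof. by case: i => // i _; rewrite /Cw /= iterS. Qed.

Lemma cprefixS k m : cprefix k m.+1 = cprefix k m ++ Cblock k m.+1.
Proof. by rewrite /cprefix -[m.+1]addn1 iotaD map_cat flatten_cat /= cats0 add1n addn1. Qed.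

Lemma cprefix_sigma k m : cprefix k m.+1 = nseq k 1 ++ sigma (cprefix k m).
Proof.
elim: m => [|m IH].
  by rewrite /cprefix /Cblock /Cw /= !cats0; elim: k => //= k ->.
rewrite [in RHS]cprefixS cprefixS IH -catA sigma_cat.
by rewrite /Cblock sigma_flatten_nseq -Cw_succ.
Qed.

Lemma cprefix_letters k m : all (fun e => 0 < e <= 2) (cprefix k m).
Proof.
by case: m => // m; rewrite cprefix_sigma all_cat sigma_letters andbT all_nseq; case: k.
Qed.

Lemma size_cprefix k m : 0 < k -> m <= size (cprefix k m).
Proof.
move=> hk; elim: m => // m IH.
rewrite cprefix_sigma size_cat size_nseq.
have := size_sigma (cprefix k m); lia.
Qed.

Lemma cprefix_prefix k m n : m <= n -> prefix (cprefix k m) (cprefix k n).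
Proof.
move/subnKC <-; elim: (n - m) => [|j IH]; first by rewrite addn0 prefix_refl.
by rewrite addnS cprefixS prefix_catl.
Qed.

Lemma nth_gt0_size (s : seq nat) i : 0 < nth 0 s i -> i < size s.
Proof. by apply: contraTT; rewrite -leqNgt => /(nth_default 0) ->. Qed.

Section Sequences.

Variable k : nat.
Hypothesis k_gt0 : 0 < k.

Lemma nth_cprefix m i : i < size (cprefix k m) -> nth 0 (cprefix k m) i = c k i.+1.
Proof.
rewrite /c /= => hi; have [hm | hm] := leqP m i.+1.
  by have /prefixP [t ->] := cprefix_prefix k hm; rewrite nth_cat hi.
have /prefixP [t ->] := cprefix_prefix k (ltnW hm).
by rewrite nth_cat (leq_trans _ (size_cprefix _ k_gt0)).
Qed.

Lemma c_small n : 0 < n <= k -> c k n = 1.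
Proof.
case: n => // n /= hn.
by rewrite /c cprefix_sigma nth_cat size_nseq hn nth_nseq hn.
Qed.

Lemma c_range n : 0 < n -> 0 < c k n <= 2.
Proof.
case: n => // n _; apply: (all_nthP 0 (cprefix_letters k n.+1)).
exact: size_cprefix.
Qed.

Lemma aS n : a k n.+1 = a k n + c k n.
Proof.
case: n => [|n]; rewrite /a; last by rewrite big_nat_recr //= addnA.
by rewrite !big_geq // (_ : c k 0 = 0) ?addn0.
Qed.

Lemma a1 : a k 1 = k.+1.
Proof. by rewrite /a big_geq // addn0 addn1. Qed.

Lemma a_small n : n <= k -> a k n.+1 = k.+1 + n.
Proof.
elim: n => [|n IH] hn; first by rewrite a1 addn0.
by rewrite aS IH ?c_small //; lia.
Qed.

Lemma a_mono m n : 0 < m -> m <= n -> a k m + (n - m) <= a k n.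
Proof.
move=> hm; elim: n => [|n IH] hmn; first lia.
case: (ltngtP m n.+1) hmn => // [hlt | ->] _; last by rewrite subnn addn0.
rewrite aS; have := IH hlt; have := c_range (leq_trans hm hlt); lia.
Qed.

Lemma b_eq_a n : 0 < n -> b k n = a k n + k + n.
Proof.
case: n => // n _; elim: n => [|n IH]; first by rewrite a1 /b big_geq //; lia.
rewrite aS /b big_nat_recr //= addnA -/(b k n.+1) IH /d; lia.
Qed.

Lemma sumn_take_cprefix M m : m <= size (cprefix k M) ->
  k.+1 + sumn (take m (cprefix k M)) = a k m.+1.
Proof.
move=> hm; rewrite sumn_take /a big_add1 /= big_mkord addn1; congr (_ + _).
by apply: eq_bigr => i _; rewrite nth_cprefix // (leq_trans _ hm).
Qed.

Lemma c_at_a n : 0 < n ->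
  c k (a k n) = 2 /\ (c k n = 2 -> c k (a k n).+1 = 1).
Proof.
case: n => // m _; set L := cprefix k m.+1.
have hm : m < size L := size_cprefix m.+1 k_gt0.
have hpos : k.+1 + sumn (take m L) = a k m.+1 := sumn_take_cprefix (ltnW hm).
have shift j : nth 0 (sigma L) j = nth 0 (cprefix k m.+2) (k + j).
  by rewrite cprefix_sigma nth_cat size_nseq ltnNge leq_addr /= addKn.
have at_c j v : nth 0 (sigma L) j = v -> 0 < v -> c k (k + j).+1 = v.
  by rewrite shift => <- hv; rewrite nth_cprefix // nth_gt0_size.
have [h2 h1] := nth_sigma_take (cprefix_letters k m.+1) hm.
rewrite -hpos; split; first exact: at_c h2 _.
by move=> hc; rewrite -addnS; apply: at_c (h1 _) _; rewrite // nth_cprefix.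
Qed.

Lemma a_gt n : 0 < n -> k < a k n.
Proof. by move=> hn; have := a_mono (ltnSn 0) hn; rewrite a1; lia. Qed.

Lemma b_eq_aa n : 0 < n -> b k n = (a k (a k n)).+1.
Proof.
case: n => // n _; rewrite b_eq_a //; elim: n => [|n IH].
  by rewrite a1 a_small //; lia.
have [c_p c_p1] := c_at_a (ltn0Sn n).
have hp1 : a k (a k n.+1).+1 = a k (a k n.+1) + 2 by rewrite aS c_p.
rewrite (aS n.+1).
have [c1 | c2] : c k n.+1 = 1 \/ c k n.+1 = 2 by have := c_range (ltn0Sn n); lia.
- by rewrite c1 addn1 hp1; lia.
- by rewrite c2 addn2 (aS (a k n.+1).+1) hp1 c_p1; lia.
Qed.

Lemma a_inj m n : 0 < m -> 0 < n -> a k m = a k n -> m = n.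
Proof.
move=> hm hn e; case: (ltngtP m n) => // h.
- by have := a_mono hm (ltnW h); lia.
- by have := a_mono hn (ltnW h); lia.
Qed.

Lemma b_inj m n : 0 < m -> 0 < n -> b k m = b k n -> m = n.
Proof.
move=> hm hn; rewrite !b_eq_a //; case: (ltngtP m n) => // h.
- by have := a_mono hm (ltnW h); lia.
- by have := a_mono hn (ltnW h); lia.
Qed.

Lemma a_neq_b m n : 0 < m -> 0 < n -> a k m <> b k n.
Proof.
move=> hm hn; rewrite b_eq_aa //; set p := a k n.
have hp : 0 < p by have := a_gt hn; lia.
have hp1 : a k p.+1 = a k p + 2 by rewrite aS (c_at_a hn).1.
case: (leqP m p) => hmp; first by have := a_mono hm hmp; lia.
by have := a_mono (ltn0Sn p) hmp; lia.
Qed.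

Lemma a_locate v : k < v -> exists2 n, 0 < n & a k n <= v < a k n.+1.
Proof.
move=> /subnK <-; elim: (v - k.+1) => [|j [n hn IH]].
  by exists 1 => //; rewrite (aS 1) a1; have := c_range (ltn0Sn 0); lia.
case: (ltnP (j.+1 + k.+1) (a k n.+1)) => hj; first by exists n => //; lia.
by exists n.+1 => //; rewrite (aS n.+1); have := c_range (ltn0Sn n); lia.
Qed.

Lemma c_eq2_a n : 0 < n -> c k n = 2 -> exists2 m, 0 < m & n = a k m.
Proof.
move=> hn c2; have [|m hm /andP [lo hi]] := a_locate (v := n).
  by case: (leqP n k) => // hnk; rewrite c_small ?hn in c2.
exists m => //; move: hi; rewrite aS.
have [c1 | cm2] : c k m = 1 \/ c k m = 2 by have := c_range hm; lia.
  by rewrite c1; lia.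
rewrite cm2 => hi; case: (eqVneq n (a k m)) => // hne.
have en : n = (a k m).+1 by lia.
by move: c2; rewrite en ((c_at_a hm).2 cm2).
Qed.

Lemma a_or_b v : k < v ->
  (exists2 n, 0 < n & v = a k n) \/ (exists2 n, 0 < n & v = b k n).
Proof.
move=> hv; have [n hn /andP [lo hi]] := a_locate hv.
case: (eqVneq v (a k n)) => [-> | hne]; first by left; exists n.
have c2 : c k n = 2 by move: hi; rewrite aS; have := c_range hn; lia.
have [m hm en] := c_eq2_a hn c2; right; exists m => //.
by rewrite b_eq_aa // -en; move: hi; rewrite aS c2; lia.
Qed.
End Sequences.

Lemma mem_queen_moves x y p : p \in queen_moves x y <->
  [\/ exists2 u, u < x & p = (u, y), exists2 v, v < y & p = (x, v)
    | exists2 t, 0 < t <= minn x y & p = (x - t, y - t)].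
Proof.
rewrite /queen_moves !mem_cat; split.
  by case/or3P => /mapP [t]; rewrite mem_iota => ht ->;
    [apply: Or31 | apply: Or32 | apply: Or33]; exists t => //; lia.
by case=> -[t ht ->]; apply/or3P;
  [apply: Or31 | apply: Or32 | apply: Or33]; apply/mapP; exists t; rewrite // mem_iota; lia.
Qed.

Lemma queen_move_lt x y p : p \in queen_moves x y -> p.1 + p.2 < x + y.
Proof. by case/mem_queen_moves => -[t ht ->] /=; lia. Qed.

Lemma queen_move_swap x y u v :
  (u, v) \in queen_moves x y -> (v, u) \in queen_moves y x.
Proof.
case/mem_queen_moves => -[t ht [-> ->]]; apply/mem_queen_moves.
- by apply: Or32; exists t.
- by apply: Or31; exists t.
- by apply: Or33; exists t; rewrite // minnC.
Qed.

Lemma isP_fuel_enough k f g x y : x + y <= f -> x + y <= g ->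
  isP_fuel k f x y = isP_fuel k g x y.
Proof.
elim: f g x y => [|f IH] [|g] x y hf hg //=.
1,2: have [-> ->] : x = 0 /\ y = 0 by lia.
1,2: by rewrite /terminal leq0n.
case: ifP => // _; apply: eq_in_all => -[u v] hp.
by have /= hlt := queen_move_lt hp; rewrite (IH g) //; lia.
Qed.

Lemma isP_terminal k x y : x + y <= k -> isP k x y.
Proof. by move=> h; rewrite /isP; case: (x + y) => [|f] /=; rewrite /terminal h. Qed.

Lemma isP_nonterminal k x y : k < x + y ->
  isP k x y = all (fun p => ~~ isP k p.1 p.2) (queen_moves x y).
Proof.
move=> hxy; rewrite /isP; case e: (x + y) hxy => [|f] //= hf.
rewrite /terminal e leqNgt hf /=; apply: eq_in_all => p hp.
have := queen_move_lt hp; rewrite e => hlt.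
by rewrite (isP_fuel_enough _ (g := p.1 + p.2)) //; lia.
Qed.

Definition Ppos (k x y : nat) : Prop :=
  x + y <= k \/
  exists n, 0 < n /\ ((x, y) = (b k n, a k n) \/ (x, y) = (a k n, b k n)).

Lemma Ppos_sym k x y : Ppos k x y -> Ppos k y x.
Proof.
case=> [h | [n [hn [[-> ->] | [-> ->]]]]]; first by left; lia.
- by right; exists n; split => //; right.
- by right; exists n; split => //; left.
Qed.

Lemma Ppos_a_b k n : 0 < n -> Ppos k (a k n) (b k n).
Proof. by move=> hn; right; exists n; split => //; right. Qed.

Lemma Ppos_b_a k n : 0 < n -> Ppos k (b k n) (a k n).
Proof. by move=> hn; right; exists n; split => //; left. Qed.

Section Game.

Variable k : nat.
Hypothesis k_gt0 : 0 < k.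

Lemma no_move_from_a_b n p : 0 < n ->
  p \in queen_moves (a k n) (b k n) -> ~ Ppos k p.1 p.2.
Proof.
move=> hn hp; have hbn := b_eq_a k_gt0 hn; have hak := a_gt k_gt0 hn.
(* Only the diagonal move onto some (a_j, b_j) survives the arithmetic: it keeps
   the difference k + n, which forces j = n and t = 0. *)
case/mem_queen_moves: hp => -[t ht ->] /=;
  case=> [|[j [hj [[e1 e2] | [e1 e2]]]]]; try lia.
all: have hbj := b_eq_a k_gt0 hj; have a_b := a_neq_b k_gt0 hj hn.
all: have b_a := a_neq_b k_gt0 hn hj; have ainj := a_inj k_gt0 hj hn.
all: have binj := b_inj k_gt0 hj hn; try lia.
have ejn : j = n by lia.
by subst j; lia.
Qed.

Lemma no_move_between_Ppos x y p : k < x + y -> Ppos k x y ->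
  p \in queen_moves x y -> ~ Ppos k p.1 p.2.
Proof.
move=> hxy [|[n [hn [[-> ->] | [-> ->]]]]]; [lia | | exact: no_move_from_a_b].
by case: p => u v /queen_move_swap hp /Ppos_sym; apply: no_move_from_a_b hp.
Qed.

Lemma move_to_Ppos x y : k < x + y -> ~ Ppos k x y ->
  exists2 p, p \in queen_moves x y & Ppos k p.1 p.2.
Proof.
wlog hxy : x y / x <= y.
  move=> wlog_le hs hP; case: (leqP x y) => [|/ltnW] h; first exact: wlog_le.
  have hs' : k < y + x by rewrite addnC.
  have [[v u] hp hq] := wlog_le y x h hs' (fun h' => hP (Ppos_sym h')).
  by exists (u, v); [apply: queen_move_swap | apply: Ppos_sym].
move=> hs hP.
have [hx | hx] := leqP x k.
  by exists (x, 0); [apply/mem_queen_moves/Or32; exists 0 => //; lia | left => /=; lia].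
have [hd | hd] := leqP (y - x) k.
  exists (0, y - x); last by left => /=; lia.
  by apply/mem_queen_moves/Or33; exists x; rewrite ?subnn //; lia.
have [[n hn ex] | [n hn ex]] := a_or_b k_gt0 hx; subst x; have hbn := b_eq_a k_gt0 hn;
  last first.
  exists (b k n, a k n); last exact: Ppos_b_a.
  by apply/mem_queen_moves/Or32; exists (a k n) => //; lia.
case: (ltngtP y (b k n)) => hy.
(* Below b_n the difference y - x is k + j for some 0 < j < n: slide to (a_j, b_j). *)
- set j := y - a k n - k.
  have [j_gt0 j_lt] : 0 < j /\ j < n by lia.
  have hlt := a_mono k_gt0 j_gt0 (ltnW j_lt); have hbj := b_eq_a k_gt0 j_gt0.
  exists (a k j, b k j); last exact: Ppos_a_b.
  apply/mem_queen_moves/Or33; exists (a k n - a k j); first lia.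
  by congr pair; lia.
- exists (a k n, b k n); last exact: Ppos_a_b.
  by apply/mem_queen_moves/Or32; exists (b k n).
- by case: hP; rewrite hy; apply: Ppos_a_b.
Qed.

Lemma isP_iff_Ppos x y : isP k x y <-> Ppos k x y.
Proof.
have [s] := ubnP (x + y); elim: s x y => // s IH x y /ltnSE hs.
have [hxy | hxy] := leqP (x + y) k.
  by split => _; [left | exact: isP_terminal].
have IHmove p : p \in queen_moves x y -> isP k p.1 p.2 <-> Ppos k p.1 p.2.
  by move=> hp; apply: IH; have := queen_move_lt hp; lia.
rewrite isP_nonterminal //; split => [/allP hall | hP].
- apply: NNPP => hP; have [p hp /(IHmove p hp) hq] := move_to_Ppos hxy hP.
  by move: (hall p hp); rewrite hq.
- apply/allP => p hp; apply/negP => /(IHmove p hp).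
  exact: no_move_between_Ppos hxy hP hp.
Qed.
End Game.

Theorem theorem5p3 (k : nat) (hk : 1 <= k) (x y : nat) :
  isP k x y <->
  (x + y <= k \/
   exists n, 1 <= n /\ ((x, y) = (b k n, a k n) \/ (x, y) = (a k n, b k n))).
Proof. exact: isP_iff_Ppos. Qed.
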